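(* Let $0<\alpha<1$, let $g:\mathbb{R}\to\mathbb{R}$ be locally bounded with $g\in C^\alpha(x_0)$, i.e. there exist $C>0$ and a constant $c$ such that $|g(x)-c|\le C|x-x_0|^\alpha$ on a neighbourhood of $x_0$. Let $\Omega=\{(x,y)\in\mathbb{R}^2: y\le g(x)\}$ be the domain below the graph of $g$ (respectively $\Omega=\{(x,y): y\ge g(x)\}$ the domain above it), and $X_0=(x_0,g(x_0))$. Then $X_0$ is strong $\left(\frac1\alpha-1\right)$-accessible in both $\Omega$ and $\Omega^c=\mathbb{R}^2\setminus\Omega$, i.e. for $A\in\{\Omega,\Omega^c\}$ there exist $C'>0$ and $r_0>0$ such that $\mathrm{meas}(A\cap B(X_0,r))\ge C' r^{\frac1\alpha+1}$ for all $r\le r_0$.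
   Context: $\mathrm{meas}$ denotes Lebesgue measure on $\mathbb{R}^2$ and $B(X,r)$ the open disc of centre $X$ and radius $r$. *)

From HB Require Import structures.
From mathcomp Require Import all_boot all_order all_algebra.
From mathcomp Require Import all_classical all_reals all_analysis.
Set Implicit Arguments. Unset Strict Implicit. Unset Printing Implicit Defensive.
Import Order.TTheory GRing.Theory Num.Theory.
Local Open Scope classical_set_scope.
Local Open Scope ring_scope.

Definition meas2 (R : realType) : set (R * R) -> \bar R :=
  ((@lebesgue_measure R) \x (@lebesgue_measure R))%E.

Definition disc (R : realType) (X : R * R) (r : R) : set (R * R) :=
  [set P | (P.1 - X.1) ^+ 2 + (P.2 - X.2) ^+ 2 < r ^+ 2].

Definition locally_bounded (R : realType) (g : R -> R) : Prop :=
  forall x : R, exists e : R, 0 < e /\ exists M : R,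
    forall y : R, `|y - x| < e -> `|g y| <= M.

Definition pointwise_holder (R : realType) (alpha : R) (g : R -> R) (x0 : R) : Prop :=
  exists C : R, 0 < C /\ exists c : R, exists delta : R, 0 < delta /\
    forall x : R, `|x - x0| < delta -> `|g x - c| <= C * (`|x - x0| `^ alpha).

Definition below_graph (R : realType) (g : R -> R) : set (R * R) :=
  [set P | P.2 <= g P.1].
Definition above_graph (R : realType) (g : R -> R) : set (R * R) :=
  [set P | g P.1 <= P.2].

(* X0 strong p-accessible in A, with measure bound C' r^(p+2); stated via
   measurable subsets (inner-measure form) since A need not be measurable. *)
Definition strong_accessible (R : realType) (p : R) (A : set (R * R)) (X0 : R * R) : Prop :=
  exists C' : R, 0 < C' /\ exists r0 : R, 0 < r0 /\
    forall r : R, 0 < r -> r <= r0 ->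
      exists S : set (R * R), measurable S /\ S `<=` A `&` disc X0 r /\
        ((C' * r `^ (p + 2))%:E <= @meas2 R S)%E.

From HB Require Import structures.
From mathcomp Require Import all_boot all_order all_algebra.
From mathcomp Require Import all_classical all_reals all_analysis.
From mathcomp Require Import ring lra.
Set Implicit Arguments.
Unset Strict Implicit.
Unset Printing Implicit Defensive.

Import Order.TTheory GRing.Theory Num.Theory.
Local Open Scope classical_set_scope.
Local Open Scope ring_scope.

(* Near x0 the graph stays within r/4 of g x0 as long as |x - x0| <= (e r)^(1/alpha),
   so both a box [x0 - h, x0 + h] x [g x0 + r/3, g x0 + r/2] above the graph and its mirror
   image below it lie in the disc B(X0, r), where h = (e r)^(1/alpha).  Each box has area
   2 h (r/6) = (e^(1/alpha)/3) r^(1/alpha + 1). *)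

Section graph_accessibility.
Context {R : realType}.

Lemma lebesgue_measure_itv_cc (a b : R) : a <= b ->
  lebesgue_measure (`[a, b] : set R) = (b - a)%:E.
Proof.
move=> ab; rewrite lebesgue_measure_itv /= lte_fin.
case: ltP => [_|ba]; first by rewrite EFinB.
have -> : b = a by apply/eqP; rewrite eq_le ab ba.
by rewrite subrr.
Qed.

Lemma meas2_rectangle (a b c d : R) : a <= b -> c <= d ->
  meas2 (`[a, b] `*` `[c, d]) = ((b - a) * (d - c))%:E.
Proof.
move=> ab cd; rewrite /meas2 product_measure1E; try exact: measurable_itv.
by rewrite EFinM -(lebesgue_measure_itv_cc ab) -(lebesgue_measure_itv_cc cd).
Qed.

Lemma box_sub_disc (X P : R * R) (r : R) : 0 < r ->
  `|P.1 - X.1| <= r / 2 -> `|P.2 - X.2| <= r / 2 -> disc X r P.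
Proof.
move=> r0 /ler_normlP[u1 u2] /ler_normlP[v1 v2]; rewrite /disc /=; nra.
Qed.

Lemma strong_accessible_boxes (p : R) (A : set (R * R))
    (x0 y0 a b : R) :
  -1/2 <= a -> a < b -> b <= 1/2 ->
  (exists K : R, 0 < K /\ exists r0 : R, 0 < r0 /\ forall r : R, 0 < r -> r <= r0 ->
     exists h : R, 0 <= h <= r / 2 /\ K * r `^ (p + 2) <= h * r /\
       `[x0 - h, x0 + h] `*` `[y0 + a * r, y0 + b * r] `<=` A) ->
  strong_accessible p A (x0, y0).
Proof.
move=> a_ge ab b_le [K [K0 [r0 [r00 boxes]]]].
exists (2 * (b - a) * K); split; first by rewrite !mulr_gt0 ?subr_gt0.
exists r0; split=> // r r_gt0 r_le.
have [h [/andP[h0 hr] [Kh boxA]]] := boxes r r_gt0 r_le.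
exists (`[x0 - h, x0 + h] `*` `[y0 + a * r, y0 + b * r]); split.
  by apply: measurableX; exact: measurable_itv.
split.
  move=> P PB; split; first exact: boxA.
  move: PB => [/=]; rewrite !in_itv /= => /andP[x1 x2] /andP[y1 y2].
  apply: box_sub_disc => //=; apply/ler_normlP; split; nra.
rewrite meas2_rectangle; [|lra|nra].
rewrite lee_fin.
have -> : (x0 + h - (x0 - h)) * (y0 + b * r - (y0 + a * r)) = 2 * (b - a) * (h * r)
  by ring.
by rewrite -mulrA ler_wpM2l // mulr_ge0 // subr_ge0 ltW.
Qed.

Lemma powR_inv_le (x alpha : R) : 0 < x <= 1 -> 0 < alpha <= 1 -> x `^ alpha^-1 <= x.
Proof. by move=> x01 /andP[a0 a1]; apply: ge1r_powR; rewrite ?invf_ge1. Qed.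

Lemma pointwise_holder_value (alpha : R) (g : R -> R) (x0 : R) :
  0 < alpha -> pointwise_holder alpha g x0 ->
  exists C : R, 0 < C /\ exists delta : R, 0 < delta /\
    forall x : R, `|x - x0| < delta -> `|g x - g x0| <= C * (`|x - x0| `^ alpha).
Proof.
move=> a0 [C [C0 [c [delta [d0 holder]]]]].
suff -> : g x0 = c by exists C; split=> //; exists delta.
have := holder x0; rewrite subrr normr0 powR0 ?gt_eqF // mulr0 => /(_ d0).
by rewrite normr_le0 subr_eq0 => /eqP.
Qed.

Lemma pointwise_holder_window (alpha : R) (g : R -> R) (x0 : R) :
  0 < alpha <= 1 -> pointwise_holder alpha g x0 ->
  exists e : R, 0 < e <= 1/2 /\ exists r0 : R, 0 < r0 <= 1 /\
    forall r : R, 0 < r -> r <= r0 ->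
      forall x : R, `|x - x0| <= (e * r) `^ alpha^-1 -> `|g x - g x0| <= r / 4.
Proof.
move=> alpha01; have [a0 _] := andP alpha01.
move=> /(pointwise_holder_value a0) [C [C0 [delta [d0 holder]]]].
set e := (4 * (C + 1))^-1.
have e0 : 0 < e by rewrite invr_gt0; lra.
have eC : 4 * (C + 1) * e = 1 by rewrite mulfV //; apply/eqP; lra.
have e_le : e <= 1/2 by nra.
exists e; split; first by rewrite e0.
exists (Order.min 1 (delta / 2)); split; first by rewrite lt_min ltr01 ge_min lexx /= andbT; lra.
move=> r r0; rewrite le_min => /andP[r1 rd] x xh.
have er0 : 0 < e * r by rewrite mulr_gt0.
have er_r : e * r <= r / 2 by nra.
have er_le : (e * r) `^ alpha^-1 <= e * r
  by apply: powR_inv_le alpha01; rewrite er0 /=; nra.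
have hp : `|x - x0| `^ alpha <= e * r.
  rewrite -[leRHS](powRr1 (ltW er0)) -[1](mulVf (lt0r_neq0 a0)) powRrM.
  by apply: ge0_ler_powR; rewrite ?nnegrE ?powR_ge0 // ltW.
apply: (le_trans (holder x _)); first by apply: (le_lt_trans xh); lra.
apply: (le_trans (ler_wpM2l (ltW C0) hp)); nra.
Qed.

Lemma strong_accessible_graph_strip (alpha : R) (g : R -> R)
    (x0 : R) (A : set (R * R)) (a b : R) :
  0 < alpha <= 1 -> pointwise_holder alpha g x0 ->
  -1/2 <= a -> a < b -> b <= 1/2 ->
  (forall (r : R) (P : R * R), 0 < r -> `|g P.1 - g x0| <= r / 4 ->
     g x0 + a * r <= P.2 <= g x0 + b * r -> A P) ->
  strong_accessible (alpha^-1 - 1) A (x0, g x0).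
Proof.
move=> alpha01 holder a_ge ab b_le stripA.
have [a0 _] := andP alpha01.
have [e [/andP[e0 e_le] [r0 [/andP[r00 r01] window]]]] :=
  pointwise_holder_window alpha01 holder.
apply: (strong_accessible_boxes a_ge ab b_le).
exists (e `^ alpha^-1); split; first exact: powR_gt0.
exists r0; split=> // r r_gt0 r_le.
have er0 : 0 < e * r by rewrite mulr_gt0.
have er_le : (e * r) `^ alpha^-1 <= e * r
  by apply: powR_inv_le alpha01; rewrite er0 /=; nra.
exists ((e * r) `^ alpha^-1); split; first by rewrite powR_ge0 /=; nra.
split.
  rewrite (_ : alpha^-1 - 1 + 2 = alpha^-1 + 1); last by ring.
  rewrite powRD ?(gt_eqF r_gt0) ?implybT // (powRr1 (ltW r_gt0)).
  by rewrite (powRM _ (ltW e0) (ltW r_gt0)) mulrA.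
move=> P [/=]; rewrite !in_itv /= => /andP[x1 x2] yP.
by apply: stripA yP => //; apply: window r_gt0 r_le _ _; apply/ler_normlP; split; lra.
Qed.

End graph_accessibility.

Theorem mainTheorem2 (R : realType) (alpha : R) (g : R -> R) (x0 : R) :
  0 < alpha -> alpha < 1 ->
  locally_bounded g -> pointwise_holder alpha g x0 ->
  let X0 := (x0, g x0) in
  let p := alpha^-1 - 1 in
  (strong_accessible p (below_graph g) X0 /\
   strong_accessible p (~` below_graph g) X0) /\
  (strong_accessible p (above_graph g) X0 /\
   strong_accessible p (~` above_graph g) X0).
Proof.
move=> a0 a1 _ holder X0 p.
have alpha01 : 0 < alpha <= 1 by rewrite a0 ltW.
have lower := strong_accessible_graph_strip alpha01 holder (a:=-1/2) (b:=-1/3).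
have upper := strong_accessible_graph_strip alpha01 holder (a:=1/3) (b:=1/2).
split; split; [apply: lower|apply: upper|apply: upper|apply: lower];
  try lra; move=> r P r0 /ler_normlP[g1 g2] /andP[y1 y2];
  rewrite /below_graph /above_graph /=.
- lra.
- apply/negP; rewrite -ltNge; lra.
- lra.
- apply/negP; rewrite -ltNge; lra.
Qed.
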